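(* Let $\varPhi\subset\mathbb{E}^3$ be a skew ruled surface in standard parametrization with invariants $\delta,\kappa,\lambda$, equipped with a right normalization with support function $q=\frac{f(u)+g(u)v}{w}$, neither $f$ nor $g$ the zero function. Then the scalar curvature $S$ of the relative metric vanishes identically if and only if $\varPhi$ is conoidal and $$f=\frac12|\delta|^{1/2}\,g\left(\int|\delta|^{1/2}\lambda\,\mathrm{d}u+c\right),\quad c\in\mathbb{R}.$$
   Context: $\varPhi$ is a ruled $C^r$-surface ($r\ge3$) in $\mathbb{E}^3$ with nonvanishing Gaussian curvature, in standard parameters $\overline{x}(u,v)=\overline{s}(u)+v\,\overline{e}(u)$, $(u,v)\in I\times\mathbb{R}$, $|\overline{e}|=|\overline{e}'|=1$, $\langle\overline{s}',\overline{e}'\rangle=0$. Frame $\overline{n}=\overline{e}'$, $\overline{z}=\overline{e}\times\overline{n}$. Invariants: $\delta=(\overline{s}',\overline{e},\overline{e}')\neq0$, $\kappa=(\overline{e},\overline{e}',\overline{e}'')$, $\lambda=\cot\sphericalangle(\overline{e},\overline{s}')$, so $\overline{s}'=\delta\lambda\overline{e}+\delta\overline{z}$. $w=\sqrt{\delta^2+v^2}$, unit normal $\overline{\xi}=(\delta\overline{n}-v\overline{z})/w$. Second fundamental form: $h_{11}=-(\kappa w^2+\delta'v-\delta^2\lambda)/w$, $h_{12}=\delta/w$, $h_{22}=0$. Conoidal means $\kappa\equiv0$. A relative normalization $\overline{y}$ is determined by its support function $q=\langle\overline{\xi},\overline{y}\rangle\neq0$; a right normalization has $q=(f+gv)/w$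 with $f,g$ functions of $u$ only ($C^{s+1}$), i.e. $\overline{y}=\frac{(\kappa f-\delta g')v+\delta' f-\delta f'-\delta^2\kappa g}{\delta^2}\overline{e}+\frac{f}{\delta}\overline{n}-g\overline{z}$. The relative metric is the (indefinite) metric $G_{ij}=q^{-1}h_{ij}$, and $S$ is its Gaussian (scalar) curvature. $\int\cdots\mathrm{d}u$ denotes an antiderivative. *)

From Stdlib Require Import Reals.
From Coquelicot Require Import Coquelicot.
Open Scope R_scope.

Definition V3 : Type := (R * R * R)%type.
Definition vx (a : V3) : R := fst (fst a).
Definition vy (a : V3) : R := snd (fst a).
Definition vz (a : V3) : R := snd a.
Definition mk3 (x y z : R) : V3 := (x, y, z).

Definition vadd (a b : V3) : V3 := mk3 (vx a + vx b) (vy a + vy b) (vz a + vz b).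
Definition vscal (k : R) (a : V3) : V3 := mk3 (k * vx a) (k * vy a) (k * vz a).
Definition dot (a b : V3) : R := vx a * vx b + vy a * vy b + vz a * vz b.
Definition cross (a b : V3) : V3 :=
  mk3 (vy a * vz b - vz a * vy b)
      (vz a * vx b - vx a * vz b)
      (vx a * vy b - vy a * vx b).
Definition vnorm (a : V3) : R := sqrt (dot a a).
Definition triple (a b c : V3) : R := dot a (cross b c).

(** cotangent of the (unoriented) angle between two non-parallel vectors:
    cos / sin = <a,b>/(|a||b|) / (|a x b|/(|a||b|)) *)
Definition cot_angle (a b : V3) : R := dot a b / vnorm (cross a b).

Definition Dv (c : R -> V3) (u : R) : V3 :=
  mk3 (Derive (fun t => vx (c t)) u)
      (Derive (fun t => vy (c t)) u)
      (Derive (fun t => vz (c t)) u).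

Definition pu3 (X : R -> R -> V3) (u v : R) : V3 := Dv (fun t => X t v) u.
Definition pv3 (X : R -> R -> V3) (u v : R) : V3 := Dv (fun t => X u t) v.
Definition pu (F : R -> R -> R) (u v : R) : R := Derive (fun t => F t v) u.
Definition pv (F : R -> R -> R) (u v : R) : R := Derive (fun t => F u t) v.

Definition inI (a b : Rbar) (u : R) : Prop := Rbar_lt a u /\ Rbar_lt u b.

Definition CkI (k : nat) (a b : Rbar) (f : R -> R) : Prop :=
  forall u, inI a b u ->
    (forall j, (j <= k)%nat -> ex_derive_n f j u) /\ continuous (Derive_n f k) u.

Definition CkI3 (k : nat) (a b : Rbar) (c : R -> V3) : Prop :=
  CkI k a b (fun t => vx (c t)) /\ CkI k a b (fun t => vy (c t)) /\
  CkI k a b (fun t => vz (c t)).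

Definition ruled (s e : R -> V3) (u v : R) : V3 := vadd (s u) (vscal v (e u)).

Definition standard_params (a b : Rbar) (s e : R -> V3) : Prop :=
  forall u, inI a b u ->
    vnorm (e u) = 1 /\ vnorm (Dv e u) = 1 /\ dot (Dv s u) (Dv e u) = 0.

Definition delta (s e : R -> V3) (u : R) : R := triple (Dv s u) (e u) (Dv e u).
Definition kappa (e : R -> V3) (u : R) : R := triple (e u) (Dv e u) (Dv (Dv e) u).
Definition lambda (s e : R -> V3) (u : R) : R := cot_angle (e u) (Dv s u).

Definition wfun (s e : R -> V3) (u v : R) : R := sqrt (delta s e u ^ 2 + v ^ 2).

(** unit normal xi = (x_u x x_v) / |x_u x x_v|  ( = (delta n - v z)/w ) *)
Definition unit_normal (s e : R -> V3) (u v : R) : V3 :=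
  let N := cross (pu3 (ruled s e) u v) (pv3 (ruled s e) u v) in
  vscal (/ vnorm N) N.

Definition h11 (s e : R -> V3) (u v : R) : R :=
  dot (pu3 (pu3 (ruled s e)) u v) (unit_normal s e u v).
Definition h12 (s e : R -> V3) (u v : R) : R :=
  dot (pv3 (pu3 (ruled s e)) u v) (unit_normal s e u v).
Definition h22 (s e : R -> V3) (u v : R) : R :=
  dot (pv3 (pv3 (ruled s e)) u v) (unit_normal s e u v).

Definition q_right (s e : R -> V3) (f g : R -> R) (u v : R) : R :=
  (f u + g u * v) / wfun s e u v.

Definition G11 s e f g u v : R := h11 s e u v / q_right s e f g u v.
Definition G12 s e f g u v : R := h12 s e u v / q_right s e f g u v.
Definition G22 s e f g u v : R := h22 s e u v / q_right s e f g u v.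

(** Gaussian curvature of a (possibly indefinite, nondegenerate) metric
    E du^2 + 2 F du dv + G dv^2, by the Brioschi formula. *)
Definition det3 (a11 a12 a13 a21 a22 a23 a31 a32 a33 : R) : R :=
  a11 * (a22 * a33 - a23 * a32) - a12 * (a21 * a33 - a23 * a31)
  + a13 * (a21 * a32 - a22 * a31).

Definition brioschi (E F G : R -> R -> R) (u v : R) : R :=
  let e := E u v in let f := F u v in let g := G u v in
  let Eu := pu E u v in let Ev := pv E u v in
  let Fu := pu F u v in let Fv := pv F u v in
  let Gu := pu G u v in let Gv := pv G u v in
  let Evv := pv (pv E) u v in let Guu := pu (pu G) u v in
  let Fuv := pv (pu F) u v in
  (det3 (- Evv / 2 + Fuv - Guu / 2) (Eu / 2) (Fu - Ev / 2)
        (Fv - Gu / 2) e f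
        (Gv / 2) f g
   - det3 0 (Ev / 2) (Gu / 2)
          (Ev / 2) e f
          (Gu / 2) f g) / (e * g - f ^ 2) ^ 2.

Definition S_rel (s e : R -> V3) (f g : R -> R) (u v : R) : R :=
  brioschi (G11 s e f g) (G12 s e f g) (G22 s e f g) u v.

(* The relative metric is (h11 du^2 + 2 h12 du dv) / q with G22 = 0, and both h11 w and
   h12 w are polynomial in v, so Brioschi's formula gives
   S = Q(v) / (delta^2 (f + g v)) for a quadratic Q whose coefficients are
   -kappa g^2/2, -kappa f g and -kappa (f^2 + delta^2 g^2/2) + R, where
   R = (delta' g/2 + delta g') f + delta <s',e> g^2/2 - delta g f'.
   Hence S = 0 iff kappa = 0 and R = 0.  With M = |delta|, R = 0 says that
   f / (sqrt M g) - A/2 is locally constant where g <> 0, A' = sqrt M lambda; the function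
   psi^2 / (psi^2 + M g^2), psi = f - sqrt M g (A + c)/2, extends this across the zeros
   of g, and its derivative is a multiple of R. *)
From Stdlib Require Import Reals Lra Lia.
From Coquelicot Require Import Coquelicot.
Open Scope R_scope.

Ltac unfold_vec := unfold triple, dot, cross, vadd, vscal, vx, vy, vz, mk3 in *; simpl in *.

Ltac eta_Derive :=
  repeat match goal with |- context [Derive (fun x => ?f x) ?u] =>
    change (Derive (fun x => f x) u) with (Derive f u) end.

Lemma mk3_eta (x : V3) : x = mk3 (vx x) (vy x) (vz x).
Proof. destruct x as [[x1 x2] x3]. reflexivity. Qed.

Lemma dot_comm x y : dot x y = dot y x.
Proof. unfold_vec; ring. Qed.

Lemma dot_vadd_l x y w : dot (vadd x y) w = dot x w + dot y w.
Proof. unfold_vec; ring. Qed.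

Lemma dot_vscal_l k x w : dot (vscal k x) w = k * dot x w.
Proof. unfold_vec; ring. Qed.

Lemma dot_vscal_r x k y : dot x (vscal k y) = k * dot x y.
Proof. unfold_vec; ring. Qed.

Lemma dot_ge0 x : 0 <= dot x x.
Proof. unfold_vec; nra. Qed.

Lemma vnorm_eq1 x : vnorm x = 1 -> dot x x = 1.
Proof.
  unfold vnorm; intros H.
  rewrite <- (sqrt_sqrt (dot x x)) by apply dot_ge0. rewrite H. ring.
Qed.

Lemma dot_cross_l x y : dot x (cross x y) = 0.
Proof. unfold_vec; ring. Qed.

Lemma dot_cross_r x y : dot y (cross x y) = 0.
Proof. unfold_vec; ring. Qed.

Lemma dot_cross_cross x y : dot (cross x y) (cross x y) = dot x x * dot y y - dot x y ^ 2.
Proof. unfold_vec; ring. Qed.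

Lemma triple_mul x y w e n z : triple x y w * triple e n z =
  det3 (dot x e) (dot x n) (dot x z) (dot y e) (dot y n) (dot y z) (dot w e) (dot w n) (dot w z).
Proof. unfold det3; unfold_vec; ring. Qed.

Section OrthonormalPair.
Variables e n : V3.
Hypothesis He : dot e e = 1.
Hypothesis Hn : dot n n = 1.
Hypothesis Hen : dot e n = 0.

Lemma triple_in_frame x y w : triple x y w =
  det3 (dot x e) (dot x n) (dot x (cross e n)) (dot y e) (dot y n) (dot y (cross e n))
       (dot w e) (dot w n) (dot w (cross e n)).
Proof.
  rewrite <- triple_mul.
  replace (triple e n (cross e n)) with (dot (cross e n) (cross e n)) by (unfold_vec; ring).
  rewrite dot_cross_cross, He, Hn, Hen. ring.
Qed.

Lemma dot_self_in_frame x : dot x x = dot x e ^ 2 + dot x n ^ 2 + dot x (cross e n) ^ 2.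
Proof.
  assert (Hz : dot x (cross e n) ^ 2 = triple x e n * triple x e n) by (unfold triple; ring).
  rewrite Hz, triple_mul, He, Hn, Hen, (dot_comm n e), Hen, (dot_comm e x), (dot_comm n x).
  unfold det3. ring.
Qed.

Lemma dot_in_frame x y :
  dot x y = dot x e * dot y e + dot x n * dot y n + dot x (cross e n) * dot y (cross e n).
Proof.
  pose proof (dot_self_in_frame x) as Px. pose proof (dot_self_in_frame y) as Py.
  pose proof (dot_self_in_frame (vadd x y)) as Pxy.
  rewrite !dot_vadd_l, (dot_comm x (vadd x y)), (dot_comm y (vadd x y)), !dot_vadd_l,
    (dot_comm y x) in Pxy.
  nra.
Qed.
End OrthonormalPair.

Definition ex_derive3 (X : R -> V3) (u : R) : Prop :=
  ex_derive (fun t => vx (X t)) u /\ ex_derive (fun t => vy (X t)) u /\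
  ex_derive (fun t => vz (X t)) u.

Lemma is_derive_dot_coord (x1 x2 x3 y1 y2 y3 : R -> R) u :
  ex_derive x1 u -> ex_derive x2 u -> ex_derive x3 u ->
  ex_derive y1 u -> ex_derive y2 u -> ex_derive y3 u ->
  is_derive (fun t => x1 t * y1 t + x2 t * y2 t + x3 t * y3 t) u
   ((Derive x1 u * y1 u + Derive x2 u * y2 u + Derive x3 u * y3 u) +
    (x1 u * Derive y1 u + x2 u * Derive y2 u + x3 u * Derive y3 u)).
Proof. intros. auto_derive; [repeat split; assumption|]. eta_Derive. ring. Qed.

Lemma is_derive_dot (X Y : R -> V3) u : ex_derive3 X u -> ex_derive3 Y u ->
  is_derive (fun t => dot (X t) (Y t)) u (dot (Dv X u) (Y u) + dot (X u) (Dv Y u)).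
Proof.
  intros (X1 & X2 & X3) (Y1 & Y2 & Y3).
  exact (is_derive_dot_coord _ _ _ _ _ _ u X1 X2 X3 Y1 Y2 Y3).
Qed.

Lemma is_derive_triple_coord (x1 x2 x3 y1 y2 y3 w1 w2 w3 : R -> R) u :
  ex_derive x1 u -> ex_derive x2 u -> ex_derive x3 u ->
  ex_derive y1 u -> ex_derive y2 u -> ex_derive y3 u ->
  ex_derive w1 u -> ex_derive w2 u -> ex_derive w3 u ->
  let X t := mk3 (x1 t) (x2 t) (x3 t) in
  let Y t := mk3 (y1 t) (y2 t) (y3 t) in
  let W t := mk3 (w1 t) (w2 t) (w3 t) in
  let dX := mk3 (Derive x1 u) (Derive x2 u) (Derive x3 u) in
  let dY := mk3 (Derive y1 u) (Derive y2 u) (Derive y3 u) in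
  let dW := mk3 (Derive w1 u) (Derive w2 u) (Derive w3 u) in
  is_derive (fun t => triple (X t) (Y t) (W t)) u
    (triple dX (Y u) (W u) + triple (X u) dY (W u) + triple (X u) (Y u) dW).
Proof.
  intros; unfold_vec.
  auto_derive; [repeat split; assumption|]. eta_Derive. ring.
Qed.

Lemma is_derive_triple (X Y W : R -> V3) u :
  ex_derive3 X u -> ex_derive3 Y u -> ex_derive3 W u ->
  is_derive (fun t => triple (X t) (Y t) (W t)) u
   (triple (Dv X u) (Y u) (W u) + triple (X u) (Dv Y u) (W u) + triple (X u) (Y u) (Dv W u)).
Proof.
  intros (X1 & X2 & X3) (Y1 & Y2 & Y3) (W1 & W2 & W3).
  pose proof (is_derive_triple_coord _ _ _ _ _ _ _ _ _ u X1 X2 X3 Y1 Y2 Y3 W1 W2 W3) as H.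
  simpl in H. rewrite <- !mk3_eta in H. exact H.
Qed.

Lemma locally_neq0 (h : R -> R) x : continuous h x -> h x <> 0 -> locally x (fun y => h y <> 0).
Proof. intros Hc Hx. apply (Hc (fun y => y <> 0)). apply open_neq. exact Hx. Qed.

Lemma inI_locally a b u : inI a b u -> locally u (inI a b).
Proof. intros H. apply (open_and _ _ (open_Rbar_gt a) (open_Rbar_lt b)). exact H. Qed.

Lemma inI_between a b x y z : inI a b x -> inI a b y -> x <= z <= y -> inI a b z.
Proof.
  intros [Hx _] [_ Hy] [Hxz Hzy]. split.
  - apply Rbar_lt_le_trans with x; [exact Hx | exact Hxz].
  - apply Rbar_le_lt_trans with y; [exact Hzy | exact Hy].
Qed.

Lemma is_derive_locally_const_eq0 (h : R -> R) u c l :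
  locally u (fun t => h t = c) -> is_derive h u l -> l = 0.
Proof.
  intros Hc Hd. rewrite <- (is_derive_unique _ _ _ Hd).
  rewrite (Derive_ext_loc h (fun _ => c) u Hc). apply Derive_const.
Qed.

Lemma derivative0_const_on a b (h : R -> R) :
  (forall t, inI a b t -> is_derive h t 0) -> forall x y, inI a b x -> inI a b y -> h x = h y.
Proof.
  intros Hh.
  assert (Hlt : forall x y, inI a b x -> inI a b y -> x < y -> h x = h y).
  { intros x y Hx Hy Hxy. apply eq_is_derive; [|exact Hxy].
    intros t Ht. apply Hh, (inI_between a b x y t Hx Hy Ht). }
  intros x y Hx Hy. destruct (Rtotal_order x y) as [H | [-> | H]].
  - exact (Hlt x y Hx Hy H).
  - reflexivity.
  - symmetry. exact (Hlt y x Hy Hx H).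
Qed.

Lemma antiderivative_on a b (h : R -> R) u0 : inI a b u0 ->
  (forall u, inI a b u -> continuous h u) ->
  exists H : R -> R, forall u, inI a b u -> is_derive H u (h u).
Proof.
  intros Hu0 Hh. exists (fun x => RInt h u0 x). intros u Hu.
  apply (is_derive_RInt h _ u0 u); [|exact (Hh u Hu)].
  apply (filter_imp (inI a b)); [|exact (inI_locally a b u Hu)].
  intros y Hy. apply (@RInt_correct R_CompleteNormedModule).
  apply (@ex_RInt_continuous R_CompleteNormedModule).
  intros z Hz. apply Hh.
  destruct (Rle_dec u0 y).
  - rewrite Rmin_left, Rmax_right in Hz by assumption. exact (inI_between a b u0 y z Hu0 Hy Hz).
  - rewrite Rmin_right, Rmax_left in Hz by lra. exact (inI_between a b y u0 z Hy Hu0 Hz).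
Qed.

Lemma Dv_ext_loc (X Y : R -> V3) u : locally u (fun t => X t = Y t) -> Dv X u = Dv Y u.
Proof.
  intros H.
  assert (Hp : forall p : V3 -> R, Derive (fun t => p (X t)) u = Derive (fun t => p (Y t)) u).
  { intros p. apply Derive_ext_loc. revert H; apply filter_imp. intros t ->; reflexivity. }
  unfold Dv. rewrite (Hp vx), (Hp vy), (Hp vz). reflexivity.
Qed.

Lemma Dv_lin (X Y : R -> V3) v u : ex_derive3 X u -> ex_derive3 Y u ->
  Dv (fun t => vadd (X t) (vscal v (Y t))) u = vadd (Dv X u) (vscal v (Dv Y u)).
Proof.
  intros (X1 & X2 & X3) (Y1 & Y2 & Y3). unfold Dv, vadd, vscal, mk3, vx, vy, vz in *; simpl in *.
  rewrite !Derive_plus, !Derive_scal; auto; apply ex_derive_scal; auto.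
Qed.

Lemma Dv_affine (x y : V3) v : Dv (fun t => vadd x (vscal t y)) v = y.
Proof.
  assert (Hlin : forall c d, Derive (fun t => c + t * d) v = d).
  { intros. apply is_derive_unique. auto_derive; auto. ring. }
  unfold Dv, vadd, vscal, mk3, vx, vy, vz; simpl.
  rewrite !Hlin. symmetry. apply mk3_eta.
Qed.

Lemma Dv_const (x : V3) v : Dv (fun _ => x) v = mk3 0 0 0.
Proof. unfold Dv. rewrite !Derive_const. reflexivity. Qed.

Lemma CkI_ex_derive_Derive k a b h u : CkI k a b h -> inI a b u ->
  forall j, (j < k)%nat -> ex_derive (Derive_n h j) u.
Proof. intros H Hu j Hj. exact (proj1 (H u Hu) (S j) Hj). Qed.

Lemma CkI3_ex_derive3 r a b (X : R -> V3) u : (3 <= r)%nat -> CkI3 r a b X -> inI a b u ->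
  ex_derive3 X u /\ ex_derive3 (Dv X) u /\ ex_derive3 (Dv (Dv X)) u.
Proof.
  intros Hr (H1 & H2 & H3) Hu.
  pose proof (CkI_ex_derive_Derive r a b _ u H1 Hu) as D1.
  pose proof (CkI_ex_derive_Derive r a b _ u H2 Hu) as D2.
  pose proof (CkI_ex_derive_Derive r a b _ u H3 Hu) as D3.
  repeat split; [apply (D1 0%nat) | apply (D2 0%nat) | apply (D3 0%nat)
    | apply (D1 1%nat) | apply (D2 1%nat) | apply (D3 1%nat)
    | apply (D1 2%nat) | apply (D2 2%nat) | apply (D3 2%nat)]; lia.
Qed.

Definition ode_sol (M g B : R -> R) (c u : R) : R := / 2 * sqrt (M u) * g u * (B u + c).

Definition ode_residual (M l f g : R -> R) (u : R) : R :=
  (Derive M u * g u / 2 + M u * Derive g u) * f u + (M u * g u) ^ 2 * l u / 2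
  - M u * g u * Derive f u.

Section LinearODE.
Variables (a b : Rbar) (M l f g : R -> R).
Hypothesis HM : forall u, inI a b u -> 0 < M u.
Hypothesis HMd : forall u, inI a b u -> ex_derive M u.
Hypothesis Hf : forall u, inI a b u -> ex_derive f u.
Hypothesis Hg : forall u, inI a b u -> ex_derive g u.

Lemma is_derive_ode_sol B c u : inI a b u -> is_derive B u (sqrt (M u) * l u) ->
  is_derive (ode_sol M g B c) u
    (/ 2 * (Derive M u / (2 * sqrt (M u)) * g u + sqrt (M u) * Derive g u) * (B u + c)
     + / 2 * M u * g u * l u).
Proof.
  intros Hu HB. unfold ode_sol. auto_derive.
  - repeat split; first [apply HMd, Hu | apply Hg, Hu | exact (HM u Hu) | eexists; exact HB].
  - eta_Derive. rewrite (is_derive_unique _ _ _ HB).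
    pose proof (sqrt_sqrt _ (Rlt_le _ _ (HM u Hu))) as Hrr.
    set (r := sqrt (M u)) in *. rewrite <- Hrr. unfold Rdiv. ring.
Qed.

Lemma ode_residual_sol B c u : inI a b u -> is_derive B u (sqrt (M u) * l u) ->
  (forall t, inI a b t -> f t = ode_sol M g B c t) -> ode_residual M l f g u = 0.
Proof.
  intros Hu HB Hsol.
  assert (Hloc : locally u (fun t => f t = ode_sol M g B c t)).
  { apply (filter_imp (inI a b)); [exact Hsol | exact (inI_locally a b u Hu)]. }
  unfold ode_residual.
  rewrite (Derive_ext_loc _ _ _ Hloc), (is_derive_unique _ _ _ (is_derive_ode_sol B c u Hu HB)).
  rewrite (Hsol u Hu). unfold ode_sol.
  pose proof (sqrt_lt_R0 _ (HM u Hu)) as Hr.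
  pose proof (sqrt_sqrt _ (Rlt_le _ _ (HM u Hu))) as Hrr.
  set (r := sqrt (M u)) in *. clearbody r. rewrite <- Hrr.
  field. lra.
Qed.

Section Defect.
Variables (B : R -> R) (c : R).
Hypothesis HB : forall u, inI a b u -> is_derive B u (sqrt (M u) * l u).

Let psi x := f x - ode_sol M g B c x.
Let W x := psi x ^ 2 + M x * g x ^ 2.

(* Where [g <> 0], [psi^2 / W] is [t^2 / (1 + t^2)] for [t = psi / (sqrt M g)], and
   [t' = - ode_residual / (M sqrt M g^2)]; unlike [t], it stays smooth across the zeros of [g]. *)
Lemma is_derive_defect u : inI a b u -> W u <> 0 ->
  is_derive (fun x => psi x ^ 2 / W x) u
    (- 2 * psi u * g u * ode_residual M l f g u / W u ^ 2).
Proof.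
  intros Hu HW. unfold W, psi in *.
  auto_derive.
  - repeat split; first [apply HMd, Hu | apply Hf, Hu | apply Hg, Hu | exact HW
      | eexists; exact (is_derive_ode_sol B c u Hu (HB u Hu))].
  - eta_Derive. unfold ode_residual.
    rewrite (is_derive_unique _ _ _ (is_derive_ode_sol B c u Hu (HB u Hu))).
    unfold ode_sol in HW |- *.
    pose proof (sqrt_lt_R0 _ (HM u Hu)) as Hr.
    pose proof (sqrt_sqrt _ (Rlt_le _ _ (HM u Hu))) as Hrr.
    set (r := sqrt (M u)) in *. clearbody r. rewrite <- Hrr in HW |- *.
    field. split; [contradict HW; lra | lra].
Qed.
End Defect.

Lemma sol_of_ode_residual B u1 : inI a b u1 -> g u1 <> 0 ->
  (forall u, inI a b u -> f u <> 0 \/ g u <> 0) ->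
  (forall u, inI a b u -> is_derive B u (sqrt (M u) * l u)) ->
  (forall u, inI a b u -> ode_residual M l f g u = 0) ->
  exists c, forall u, inI a b u -> f u = ode_sol M g B c u.
Proof.
  intros Hu1 Hgu1 Hfg HB Hres.
  pose proof (sqrt_lt_R0 _ (HM u1 Hu1)) as Hr1.
  exists (2 * f u1 / (sqrt (M u1) * g u1) - B u1).
  set (c := 2 * f u1 / (sqrt (M u1) * g u1) - B u1).
  set (psi x := f x - ode_sol M g B c x).
  set (W x := psi x ^ 2 + M x * g x ^ 2).
  assert (HW : forall u, inI a b u -> W u <> 0).
  { intros u Hu. apply Rgt_not_eq. unfold W.
    pose proof (HM u Hu). pose proof (pow2_ge_0 (psi u)). pose proof (pow2_ge_0 (g u)).
    destruct (Req_dec (g u) 0) as [Hgu | Hgu].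
    - destruct (Hfg u Hu) as [Hfu | Hgu']; [|contradiction].
      assert (psi u = f u) by (unfold psi, ode_sol; rewrite Hgu; ring).
      pose proof (pow2_gt_0 _ Hfu). nra.
    - pose proof (pow2_gt_0 _ Hgu). nra. }
  assert (Hconst : forall u, inI a b u -> psi u ^ 2 / W u = psi u1 ^ 2 / W u1).
  { intros u Hu. apply (derivative0_const_on a b (fun x => psi x ^ 2 / W x)); [|exact Hu | exact Hu1].
    intros t Ht. pose proof (is_derive_defect B c HB t Ht (HW t Ht)) as D.
    rewrite (Hres t Ht) in D. replace 0 with (- 2 * psi t * g t * 0 / W t ^ 2)
      by (unfold Rdiv; ring).
    exact D. }
  assert (Hpsi1 : psi u1 = 0) by (unfold psi, ode_sol, c; field; lra).
  intros u Hu.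
  specialize (Hconst u Hu). rewrite Hpsi1 in Hconst.
  assert (Hpsi : psi u ^ 2 = 0).
  { apply (Rmult_eq_reg_r (/ W u)); [|apply Rinv_neq_0_compat, HW, Hu].
    unfold Rdiv in Hconst. rewrite Hconst. ring. }
  unfold psi in Hpsi. nra.
Qed.

Lemma ode_residual_eq0_iff u1 : (forall u, inI a b u -> continuous l u) ->
  inI a b u1 -> g u1 <> 0 -> (forall u, inI a b u -> f u <> 0 \/ g u <> 0) ->
  (forall u, inI a b u -> ode_residual M l f g u = 0) <->
  exists B : R -> R, (forall u, inI a b u -> is_derive B u (sqrt (M u) * l u)) /\
    exists c, forall u, inI a b u -> f u = ode_sol M g B c u.
Proof.
  intros Hl Hu1 Hgu1 Hfg. split.
  - intros Hres.
    assert (Hcont : forall u, inI a b u -> continuous (fun x => sqrt (M x) * l x) u).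
    { intros u Hu. apply (continuous_mult (fun x => sqrt (M x)) l); [|exact (Hl u Hu)].
      apply continuous_sqrt_comp, (@ex_derive_continuous R_AbsRing R_NormedModule), HMd, Hu. }
    destruct (antiderivative_on a b _ u1 Hu1 Hcont) as [B HB].
    exists B. split; [exact HB|].
    exact (sol_of_ode_residual B u1 Hu1 Hgu1 Hfg HB Hres).
  - intros (B & HB & c & Hsol) u Hu.
    exact (ode_residual_sol B c u Hu (HB u Hu) Hsol).
Qed.
End LinearODE.

Lemma sign_ode_residual_Rabs (m l f g : R -> R) u : ex_derive m u -> m u <> 0 ->
  sign (m u) * ode_residual (fun x => Rabs (m x)) l f g u =
  (Derive m u * g u / 2 + m u * Derive g u) * f u + m u * (Rabs (m u) * l u) * g u ^ 2 / 2
  - m u * g u * Derive f u.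
Proof.
  intros [dm Hdm] Hm. unfold ode_residual.
  replace (Derive (fun x => Rabs (m x)) u) with (sign (m u) * dm)
    by (symmetry; apply is_derive_unique, is_derive_Rabs; assumption).
  rewrite (is_derive_unique _ _ _ Hdm).
  destruct (Rlt_or_le (m u) 0) as [Hneg | Hpos].
  - rewrite (sign_eq_m1 _ Hneg), (Rabs_left _ Hneg). unfold Rdiv. ring.
  - assert (Hpos' : 0 < m u) by lra.
    rewrite (sign_eq_1 _ Hpos'), (Rabs_pos_eq _ Hpos). unfold Rdiv. ring.
Qed.

Section RuledSurface.
Variables (a b : Rbar) (s e : R -> V3).
Hypothesis Hs : forall u, inI a b u -> ex_derive3 s u /\ ex_derive3 (Dv s) u.
Hypothesis He : forall u, inI a b u ->
  ex_derive3 e u /\ ex_derive3 (Dv e) u /\ ex_derive3 (Dv (Dv e)) u.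
Hypothesis Hsp : standard_params a b s e.
Hypothesis Hd : forall u, inI a b u -> delta s e u <> 0.

Local Notation ds u := (Dv s u).
Local Notation dds u := (Dv (Dv s) u).
Local Notation de u := (Dv e u).
Local Notation dde u := (Dv (Dv e) u).
Local Notation z u := (cross (e u) (Dv e u)).

Lemma dot_e_e u : inI a b u -> dot (e u) (e u) = 1.
Proof. intros H. apply vnorm_eq1, (Hsp u H). Qed.

Lemma dot_de_de u : inI a b u -> dot (de u) (de u) = 1.
Proof. intros H. apply vnorm_eq1, (Hsp u H). Qed.

Lemma dot_ds_de u : inI a b u -> dot (ds u) (de u) = 0.
Proof. intros H. apply (Hsp u H). Qed.

Lemma derive_dot_locally_const (X Y : R -> V3) c u :
  inI a b u -> ex_derive3 X u -> ex_derive3 Y u ->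
  (forall t, inI a b t -> dot (X t) (Y t) = c) ->
  dot (Dv X u) (Y u) + dot (X u) (Dv Y u) = 0.
Proof.
  intros Hu HX HY Hc.
  apply (is_derive_locally_const_eq0 (fun t => dot (X t) (Y t)) u c);
    [|exact (is_derive_dot X Y u HX HY)].
  apply (filter_imp (inI a b)); [exact Hc | exact (inI_locally a b u Hu)].
Qed.

Lemma dot_e_de u : inI a b u -> dot (e u) (de u) = 0.
Proof.
  intros H. destruct (He u H) as (He0 & _).
  pose proof (derive_dot_locally_const e e 1 u H He0 He0 dot_e_e) as D.
  rewrite (dot_comm (de u)) in D. lra.
Qed.

Lemma dot_de_dde u : inI a b u -> dot (de u) (dde u) = 0.
Proof.
  intros H. destruct (He u H) as (_ & He1 & _).
  pose proof (derive_dot_locally_const (Dv e) (Dv e) 1 u H He1 He1 dot_de_de) as D.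
  rewrite (dot_comm (dde u)) in D. lra.
Qed.

Lemma dot_e_dde u : inI a b u -> dot (e u) (dde u) = -1.
Proof.
  intros H. destruct (He u H) as (He0 & He1 & _).
  pose proof (derive_dot_locally_const e (Dv e) 0 u H He0 He1 dot_e_de) as D.
  rewrite (dot_de_de u H) in D. lra.
Qed.

Lemma dot_dds_de u : inI a b u -> dot (dds u) (de u) + dot (ds u) (dde u) = 0.
Proof.
  intros H. destruct (Hs u H) as (_ & Hs1). destruct (He u H) as (_ & He1 & _).
  exact (derive_dot_locally_const (Dv s) (Dv e) 0 u H Hs1 He1 dot_ds_de).
Qed.

Lemma dot_z_z u : inI a b u -> dot (z u) (z u) = 1.
Proof. intros H. rewrite dot_cross_cross, dot_e_e, dot_de_de, dot_e_de by exact H. ring. Qed.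

Lemma kappa_dot u : kappa e u = dot (dde u) (z u).
Proof. unfold kappa; unfold_vec; ring. Qed.

Lemma continuous_kappa u : inI a b u -> continuous (kappa e) u.
Proof.
  intros H. destruct (He u H) as (He0 & He1 & He2).
  apply (@ex_derive_continuous R_AbsRing R_NormedModule).
  eexists. exact (is_derive_triple e (Dv e) (Dv (Dv e)) u He0 He1 He2).
Qed.

Lemma delta_dot u : delta s e u = dot (ds u) (z u).
Proof. reflexivity. Qed.

Lemma dot_ds_dde u : inI a b u -> dot (ds u) (dde u) = kappa e u * delta s e u - dot (ds u) (e u).
Proof.
  intros H. rewrite (dot_in_frame (e u) (de u) (dot_e_e u H) (dot_de_de u H) (dot_e_de u H)).
  rewrite (dot_comm (dde u) (e u)), (dot_comm (dde u) (de u)), dot_e_dde, dot_de_dde, dot_ds_de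
    by exact H.
  rewrite kappa_dot, delta_dot. ring.
Qed.

Lemma is_derive_delta u : inI a b u -> is_derive (delta s e) u (dot (dds u) (z u)).
Proof.
  intros H. destruct (Hs u H) as (_ & Hs1). destruct (He u H) as (He0 & He1 & _).
  pose proof (is_derive_triple (Dv s) e (Dv e) u Hs1 He0 He1) as D.
  assert (T2 : triple (ds u) (e u) (dde u) = 0).
  { rewrite (triple_in_frame (e u) (de u) (dot_e_e u H) (dot_de_de u H) (dot_e_de u H)).
    rewrite dot_ds_de, dot_e_de, (dot_comm (dde u) (de u)), dot_de_dde by exact H.
    unfold det3. ring. }
  replace (dot (dds u) (z u)) with
    (triple (dds u) (e u) (de u) + triple (ds u) (de u) (de u) + triple (ds u) (e u) (dde u)).
  - exact D.
  - rewrite T2. unfold_vec. ring.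
Qed.

Lemma ex_derive_delta u : inI a b u -> ex_derive (delta s e) u.
Proof. intros H. eexists. exact (is_derive_delta u H). Qed.

Lemma pu3_ruled u v : inI a b u -> pu3 (ruled s e) u v = vadd (ds u) (vscal v (de u)).
Proof.
  intros H. destruct (Hs u H) as (Hs0 & _). destruct (He u H) as (He0 & _).
  unfold pu3, ruled. apply Dv_lin; assumption.
Qed.

Lemma pv3_ruled u v : pv3 (ruled s e) u v = e u.
Proof. unfold pv3, ruled. apply Dv_affine. Qed.

Lemma pu3_pu3_ruled u v : inI a b u -> pu3 (pu3 (ruled s e)) u v = vadd (dds u) (vscal v (dde u)).
Proof.
  intros H. destruct (Hs u H) as (_ & Hs1). destruct (He u H) as (_ & He1 & _).
  unfold pu3 at 1. rewrite (Dv_ext_loc _ (fun t => vadd (ds t) (vscal v (de t)))).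
  - apply Dv_lin; assumption.
  - apply (filter_imp (inI a b)); [intros t Ht; exact (pu3_ruled t v Ht) | exact (inI_locally a b u H)].
Qed.

Lemma pv3_pu3_ruled u v : inI a b u -> pv3 (pu3 (ruled s e)) u v = de u.
Proof.
  intros H. unfold pv3 at 1.
  rewrite (Dv_ext_loc _ (fun t => vadd (ds u) (vscal t (de u)))).
  - apply Dv_affine.
  - apply filter_forall. intros t. exact (pu3_ruled u t H).
Qed.

Lemma pv3_pv3_ruled u v : pv3 (pv3 (ruled s e)) u v = mk3 0 0 0.
Proof.
  unfold pv3 at 1. rewrite (Dv_ext_loc _ (fun _ => e u)).
  - apply Dv_const.
  - apply filter_forall. intros t. apply pv3_ruled.
Qed.

Local Notation nrm u v := (cross (vadd (ds u) (vscal v (de u))) (e u)).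

Ltac frame_coords H :=
  rewrite (triple_in_frame _ _ (dot_e_e _ H) (dot_de_de _ H) (dot_e_de _ H));
  rewrite ?dot_vadd_l, ?dot_vscal_l, ?(dot_comm (de _) (e _)), ?(dot_comm (dde _) (de _)),
    ?(dot_comm (dde _) (e _)), ?(dot_comm (z _) (e _)), ?(dot_comm (z _) (de _)),
    ?(dot_e_e _ H), ?(dot_de_de _ H), ?(dot_e_de _ H), ?(dot_ds_de _ H), ?(dot_de_dde _ H),
    ?(dot_e_dde _ H), ?(dot_z_z _ H), ?dot_cross_l, ?dot_cross_r, <- ?kappa_dot, <- ?delta_dot;
  unfold det3.

Lemma dot_nrm_nrm u v : inI a b u -> dot (nrm u v) (nrm u v) = delta s e u ^ 2 + v ^ 2.
Proof.
  intros H. rewrite (dot_self_in_frame (e u) (de u) (dot_e_e u H) (dot_de_de u H) (dot_e_de u H)).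
  rewrite !(dot_comm (nrm u v)).
  change (dot ?x (cross ?y ?w)) with (triple x y w).
  do 3 frame_coords H. ring.
Qed.

Lemma wfun_pos u v : inI a b u -> 0 < wfun s e u v.
Proof.
  intros H. unfold wfun. apply sqrt_lt_R0.
  pose proof (pow2_gt_0 _ (Hd u H)). pose proof (pow2_ge_0 v). lra.
Qed.

Lemma unit_normal_eq u v : inI a b u -> unit_normal s e u v = vscal (/ wfun s e u v) (nrm u v).
Proof.
  intros H. unfold unit_normal, wfun. rewrite pu3_ruled, pv3_ruled by exact H.
  unfold vnorm. rewrite dot_nrm_nrm by exact H. reflexivity.
Qed.

Lemma h12_eq u v : inI a b u -> h12 s e u v = delta s e u / wfun s e u v.
Proof.
  intros H. unfold h12. rewrite pv3_pu3_ruled, unit_normal_eq, dot_vscal_r by exact H.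
  change (dot ?x (cross ?y ?w)) with (triple x y w). frame_coords H.
  field. apply Rgt_not_eq, wfun_pos, H.
Qed.

Lemma h11_eq u v : inI a b u -> h11 s e u v =
  - (kappa e u * (delta s e u ^ 2 + v ^ 2) + Derive (delta s e) u * v
     - delta s e u * dot (ds u) (e u)) / wfun s e u v.
Proof.
  intros H. unfold h11. rewrite pu3_pu3_ruled, unit_normal_eq, dot_vscal_r by exact H.
  change (dot ?x (cross ?y ?w)) with (triple x y w). frame_coords H.
  rewrite (is_derive_unique _ _ _ (is_derive_delta u H)).
  pose proof (dot_dds_de u H) as Hdds. rewrite dot_ds_dde in Hdds by exact H.
  replace (dot (dds u) (de u)) with (dot (ds u) (e u) - kappa e u * delta s e u) by lra.
  field. apply Rgt_not_eq, wfun_pos, H.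
Qed.

Lemma h22_eq u v : h22 s e u v = 0.
Proof. unfold h22. rewrite pv3_pv3_ruled. unfold_vec. ring. Qed.

Lemma lambda_eq u : inI a b u -> lambda s e u = dot (ds u) (e u) / Rabs (delta s e u).
Proof.
  intros H. unfold lambda, cot_angle, vnorm.
  rewrite dot_cross_cross, (dot_e_e u H), (dot_comm (e u) (ds u)).
  rewrite (dot_self_in_frame (e u) (de u) (dot_e_e u H) (dot_de_de u H) (dot_e_de u H) (ds u)),
    (dot_ds_de u H), <- delta_dot.
  rewrite <- sqrt_Rsqr_abs. do 2 f_equal. unfold Rsqr. ring.
Qed.

Lemma continuous_lambda u : inI a b u -> continuous (lambda s e) u.
Proof.
  intros H. apply (continuous_ext_loc _ (fun x => dot (ds x) (e x) / Rabs (delta s e x))).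
  - apply (filter_imp (inI a b)); [|exact (inI_locally a b u H)].
    intros x Hx. symmetry. exact (lambda_eq x Hx).
  - destruct (Hs u H) as (_ & Hs1). destruct (He u H) as (He0 & _).
    apply (continuous_mult (fun x => dot (ds x) (e x)) (fun x => / Rabs (delta s e x))).
    + apply (@ex_derive_continuous R_AbsRing R_NormedModule).
      eexists. exact (is_derive_dot (Dv s) e u Hs1 He0).
    + apply continuous_Rinv_comp; [|apply Rabs_no_R0, Hd, H].
      apply continuous_Rabs_comp, (@ex_derive_continuous R_AbsRing R_NormedModule).
      exact (ex_derive_delta u H).
Qed.
End RuledSurface.

Lemma brioschi_G0 (E F G : R -> R -> R) u v : (forall u v, G u v = 0) -> F u v <> 0 ->
  brioschi E F G u v =
  (F u v * (pv (pv E) u v / 2 - pv (pu F) u v) + pv F u v * (pu F u v - pv E u v / 2)) / F u v ^ 3.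
Proof.
  intros HG HF.
  assert (Hu : forall u v, pu G u v = 0).
  { intros. unfold pu. rewrite (Derive_ext _ (fun _ => 0)) by auto. apply Derive_const. }
  assert (Hv : pv G u v = 0).
  { unfold pv. rewrite (Derive_ext _ (fun _ => 0)) by auto. apply Derive_const. }
  assert (Huu : pu (pu G) u v = 0).
  { unfold pu at 1. rewrite (Derive_ext _ (fun _ => 0)) by auto. apply Derive_const. }
  unfold brioschi. cbv zeta. rewrite HG, Hu, Hv, Huu. unfold det3. field. exact HF.
Qed.

Lemma Rdiv_div_cancel_r x y w : w <> 0 -> (x / w) / (y / w) = x / y.
Proof.
  intros Hw. destruct (Req_dec y 0) as [-> | Hy].
  - unfold Rdiv. rewrite !Rmult_0_l, !Rinv_0. ring.
  - field. auto.
Qed.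

(* Of the four values [0, 1, 2, 3], at most one is the root of [F + G v]; a quadratic
   vanishing at the other three is zero. *)
Lemma quadratic_eq0_coeffs c2 c1 c0 F G : F <> 0 \/ G <> 0 ->
  (forall v, F + G * v <> 0 -> c2 * v ^ 2 + c1 * v + c0 = 0) -> c2 = 0 /\ c1 = 0 /\ c0 = 0.
Proof.
  intros HFG H.
  destruct (Req_dec (F + G * 0) 0) as [h0 | h0]; destruct (Req_dec (F + G * 1) 0) as [h1 | h1];
  destruct (Req_dec (F + G * 2) 0) as [h2 | h2]; destruct (Req_dec (F + G * 3) 0) as [h3 | h3];
  try (exfalso; destruct HFG; lra);
  repeat match goal with
  | h : F + G * ?x <> 0 |- _ => pose proof (H x h); clear h
  end; simpl in *; lra.
Qed.

Definition S_residual (s e : R -> V3) (f g : R -> R) (u : R) : R :=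
  (Derive (delta s e) u * g u / 2 + delta s e u * Derive g u) * f u
  + delta s e u * dot (Dv s u) (e u) * g u ^ 2 / 2 - delta s e u * g u * Derive f u.

Section RelativeMetric.
Variables (a b : Rbar) (s e : R -> V3) (f g : R -> R).
Hypothesis Hs : forall u, inI a b u -> ex_derive3 s u /\ ex_derive3 (Dv s) u.
Hypothesis He : forall u, inI a b u ->
  ex_derive3 e u /\ ex_derive3 (Dv e) u /\ ex_derive3 (Dv (Dv e)) u.
Hypothesis Hsp : standard_params a b s e.
Hypothesis Hd : forall u, inI a b u -> delta s e u <> 0.
Hypothesis Hf : forall u, inI a b u -> ex_derive f u.
Hypothesis Hg : forall u, inI a b u -> ex_derive g u.

Local Notation D u := (delta s e u).
Local Notation D' u := (Derive (delta s e) u).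
Local Notation K u := (kappa e u).
Local Notation A u := (dot (Dv s u) (e u)).
Local Notation P u v := (f u + g u * v).

Lemma G11_eq u v : inI a b u ->
  G11 s e f g u v = - (K u * (D u ^ 2 + v ^ 2) + D' u * v - D u * A u) / P u v.
Proof.
  intros H. unfold G11, q_right. rewrite (h11_eq a b) by assumption.
  apply Rdiv_div_cancel_r, Rgt_not_eq, (wfun_pos a b s e Hd), H.
Qed.

Lemma G12_eq u v : inI a b u -> G12 s e f g u v = D u / P u v.
Proof.
  intros H. unfold G12, q_right. rewrite (h12_eq a b) by assumption.
  apply Rdiv_div_cancel_r, Rgt_not_eq, (wfun_pos a b s e Hd), H.
Qed.

Lemma G22_eq u v : G22 s e f g u v = 0.
Proof. unfold G22. rewrite h22_eq. unfold Rdiv. ring. Qed.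

Lemma locally_P_neq0 u v : P u v <> 0 -> locally v (fun t => P u t <> 0).
Proof.
  intros HP. apply (locally_neq0 (fun t => P u t)); [|exact HP].
  apply (@ex_derive_continuous R_AbsRing R_NormedModule). auto_derive. exact I.
Qed.

Ltac nonzero HP :=
  repeat split; repeat apply Rmult_integral_contrapositive_currified;
  first [exact HP | exact R1_neq_R0].

Lemma pv_G11 u v : inI a b u -> P u v <> 0 ->
  pv (G11 s e f g) u v =
  - ((2 * K u * v + D' u) * P u v - (K u * (D u ^ 2 + v ^ 2) + D' u * v - D u * A u) * g u)
    / P u v ^ 2.
Proof.
  intros H HP. unfold pv.
  rewrite (Derive_ext _ (fun t => - (K u * (D u ^ 2 + t ^ 2) + D' u * t - D u * A u) / P u t))
    by (intros; apply G11_eq, H).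
  apply is_derive_unique. auto_derive; [exact HP|]. field. exact HP.
Qed.

Lemma pv_pv_G11 u v : inI a b u -> P u v <> 0 ->
  pv (pv (G11 s e f g)) u v =
  - (2 * K u * P u v ^ 2
     - 2 * ((2 * K u * v + D' u) * P u v - (K u * (D u ^ 2 + v ^ 2) + D' u * v - D u * A u) * g u)
       * g u)
    / P u v ^ 3.
Proof.
  intros H HP. unfold pv at 1.
  rewrite (Derive_ext_loc _ (fun t => - ((2 * K u * t + D' u) * P u t
    - (K u * (D u ^ 2 + t ^ 2) + D' u * t - D u * A u) * g u) / P u t ^ 2)).
  - apply is_derive_unique. auto_derive; [nonzero HP|]. field. exact HP.
  - apply (filter_imp (fun t => P u t <> 0)); [|exact (locally_P_neq0 u v HP)].
    intros t Ht. exact (pv_G11 u t H Ht).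
Qed.

Lemma pv_G12 u v : inI a b u -> P u v <> 0 -> pv (G12 s e f g) u v = - D u * g u / P u v ^ 2.
Proof.
  intros H HP. unfold pv.
  rewrite (Derive_ext _ (fun t => D u / P u t)) by (intros; apply G12_eq, H).
  apply is_derive_unique. auto_derive; [exact HP|]. field. exact HP.
Qed.

Lemma pu_G12 u v : inI a b u -> P u v <> 0 ->
  pu (G12 s e f g) u v =
  (D' u * P u v - D u * (Derive f u + Derive g u * v)) / P u v ^ 2.
Proof.
  intros H HP. unfold pu.
  rewrite (Derive_ext_loc _ (fun t => D t / P t v)).
  - apply is_derive_unique. auto_derive.
    + repeat split; [apply (ex_derive_delta a b s e); assumption | apply Hf, H | apply Hg, H
        | exact HP].
    + eta_Derive. field. exact HP.
  - apply (filter_imp (inI a b)); [|exact (inI_locally a b u H)].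
    intros t Ht. exact (G12_eq t v Ht).
Qed.

Lemma pv_pu_G12 u v : inI a b u -> P u v <> 0 ->
  pv (pu (G12 s e f g)) u v =
  ((D' u * g u - D u * Derive g u) * P u v
   - 2 * (D' u * P u v - D u * (Derive f u + Derive g u * v)) * g u) / P u v ^ 3.
Proof.
  intros H HP. unfold pv at 1.
  rewrite (Derive_ext_loc _
    (fun t => (D' u * P u t - D u * (Derive f u + Derive g u * t)) / P u t ^ 2)).
  - apply is_derive_unique. auto_derive; [nonzero HP|]. field. exact HP.
  - apply (filter_imp (fun t => P u t <> 0)); [|exact (locally_P_neq0 u v HP)].
    intros t Ht. exact (pu_G12 u t H Ht).
Qed.

Lemma S_rel_eq u v : inI a b u -> P u v <> 0 ->
  S_rel s e f g u v =
  (- K u * g u ^ 2 / 2 * v ^ 2 - K u * f u * g u * v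
   + (- K u * (f u ^ 2 + D u ^ 2 * g u ^ 2 / 2) + S_residual s e f g u)) / (D u ^ 2 * P u v).
Proof.
  intros H HP. unfold S_rel.
  assert (HD : D u <> 0) by exact (Hd u H).
  rewrite brioschi_G0 by (rewrite ?G12_eq by exact H; auto using G22_eq;
    unfold Rdiv; apply Rmult_integral_contrapositive_currified; auto using Rinv_neq_0_compat).
  rewrite pv_pv_G11, pv_pu_G12, pv_G12, pu_G12, pv_G11, G12_eq by assumption.
  unfold S_residual. field. split; assumption.
Qed.

Lemma S_residual_eq u : inI a b u ->
  S_residual s e f g u = sign (D u) * ode_residual (fun x => Rabs (delta s e x)) (lambda s e) f g u.
Proof.
  intros H. rewrite sign_ode_residual_Rabs by (apply (ex_derive_delta a b s e) || apply Hd; assumption).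
  rewrite (lambda_eq a b s e) by assumption.
  unfold S_residual. field. apply Rabs_no_R0, Hd, H.
Qed.

Lemma S_residual_eq0_iff u : inI a b u ->
  S_residual s e f g u = 0 <-> ode_residual (fun x => Rabs (delta s e x)) (lambda s e) f g u = 0.
Proof.
  intros H. rewrite S_residual_eq by exact H.
  pose proof (sign_neq_0 _ (Hd u H)) as Hsign. split; intros Hr.
  - destruct (Rmult_integral _ _ Hr); [contradiction | assumption].
  - rewrite Hr. ring.
Qed.

Lemma kappa_eq0_of_coeffs : (forall u, inI a b u -> f u <> 0 \/ g u <> 0) ->
  (forall u, inI a b u -> K u * g u = 0) ->
  (forall u, inI a b u -> K u * f u ^ 2 = S_residual s e f g u) ->
  forall u, inI a b u -> K u = 0.
Proof.
  intros Hfg Hg0 Hc0 u Hu. destruct (Req_dec (K u) 0) as [| HK]; [assumption | exfalso].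
  assert (Hloc : locally u (fun x => g x = 0)).
  { apply (filter_imp (fun x => inI a b x /\ K x <> 0)).
    - intros x [Hx HKx]. apply (Rmult_eq_reg_l (K x)); [rewrite Rmult_0_r; exact (Hg0 x Hx) | exact HKx].
    - apply filter_and; [exact (inI_locally a b u Hu) |].
      exact (locally_neq0 _ u (continuous_kappa a b e He u Hu) HK). }
  pose proof (locally_singleton _ _ Hloc) as Hgu. simpl in Hgu.
  assert (Hdgu : Derive g u = 0) by (rewrite (Derive_ext_loc g (fun _ => 0) u Hloc); apply Derive_const).
  destruct (Hfg u Hu) as [Hfu | Hgu']; [|contradiction].
  pose proof (Hc0 u Hu) as Hc. unfold S_residual in Hc. rewrite Hgu, Hdgu in Hc.
  apply HK. apply (Rmult_eq_reg_r (f u ^ 2)); [lra | apply pow_nonzero, Hfu].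
Qed.

Lemma S_rel_eq0_iff : (forall u, inI a b u -> f u <> 0 \/ g u <> 0) ->
  (forall u v, inI a b u -> P u v <> 0 -> S_rel s e f g u v = 0) <->
  (forall u, inI a b u -> K u = 0) /\ (forall u, inI a b u -> S_residual s e f g u = 0).
Proof.
  intros Hfg. split.
  - intros HS.
    assert (Hcoef : forall u, inI a b u ->
      - K u * g u ^ 2 / 2 = 0 /\ - K u * f u * g u = 0 /\
      - K u * (f u ^ 2 + D u ^ 2 * g u ^ 2 / 2) + S_residual s e f g u = 0).
    { intros u Hu. apply (quadratic_eq0_coeffs _ _ _ (f u) (g u) (Hfg u Hu)).
      intros v Hv. pose proof (HS u v Hu Hv) as H0. rewrite S_rel_eq in H0 by assumption.
      unfold Rdiv in H0. destruct (Rmult_integral _ _ H0) as [Hnum | Hinv].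
      { rewrite <- Hnum. unfold Rdiv. ring. }
      exfalso. revert Hinv. apply Rinv_neq_0_compat, Rmult_integral_contrapositive_currified;
        [apply pow_nonzero, Hd, Hu | exact Hv]. }
    assert (HKg : forall u, inI a b u -> K u * g u = 0).
    { intros u Hu. destruct (Hcoef u Hu) as (Hc2 & _).
      assert (Hgg : K u * g u * g u = 0) by lra.
      destruct (Rmult_integral _ _ Hgg) as [| Hgu]; [assumption | rewrite Hgu; ring]. }
    assert (HK : forall u, inI a b u -> K u = 0).
    { apply kappa_eq0_of_coeffs; [exact Hfg | exact HKg |].
      intros u Hu. destruct (Hcoef u Hu) as (_ & _ & Hc0).
      replace (- K u * (f u ^ 2 + D u ^ 2 * g u ^ 2 / 2))
        with (- K u * f u ^ 2 - (K u * g u) * (D u ^ 2 * g u) / 2) in Hc0 by (unfold Rdiv; ring).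
      rewrite (HKg u Hu) in Hc0. lra. }
    split; [exact HK|].
    intros u Hu. destruct (Hcoef u Hu) as (_ & _ & Hc0). rewrite (HK u Hu) in Hc0. lra.
  - intros [HK HR] u v Hu HP. rewrite S_rel_eq, HK, HR by assumption. unfold Rdiv. ring.
Qed.
End RelativeMetric.

Theorem proposition2 (a b : Rbar) (r k : nat) (s e : R -> V3) (f g : R -> R) :
  Rbar_lt a b ->
  (3 <= r)%nat -> (1 <= k)%nat ->
  CkI3 r a b s -> CkI3 r a b e ->
  standard_params a b s e ->
  (forall u, inI a b u -> delta s e u <> 0) ->
  CkI (k + 1) a b f -> CkI (k + 1) a b g ->
  (exists u, inI a b u /\ f u <> 0) ->
  (exists u, inI a b u /\ g u <> 0) ->
  (forall u, inI a b u -> f u <> 0 \/ g u <> 0) ->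
  ((forall u v, inI a b u -> f u + g u * v <> 0 -> S_rel s e f g u v = 0)
   <->
   ((forall u, inI a b u -> kappa e u = 0) /\
    exists A : R -> R,
      (forall u, inI a b u ->
         is_derive A u (sqrt (Rabs (delta s e u)) * lambda s e u)) /\
      exists c : R,
        forall u, inI a b u ->
          f u = / 2 * sqrt (Rabs (delta s e u)) * g u * (A u + c))).
Proof.
  intros _ Hr _ Hs He Hsp Hd Hf Hg _ [u1 [Hu1 Hgu1]] Hfg.
  assert (Hs' : forall u, inI a b u -> ex_derive3 s u /\ ex_derive3 (Dv s) u).
  { intros u Hu. destruct (CkI3_ex_derive3 r a b s u Hr Hs Hu) as (Hs0 & Hs1 & _). now split. }
  pose proof (fun u => CkI3_ex_derive3 r a b e u Hr He) as He'.
  pose proof (fun u Hu => CkI_ex_derive_Derive _ a b f u Hf Hu 0 ltac:(lia)) as Hf'.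
  pose proof (fun u Hu => CkI_ex_derive_Derive _ a b g u Hg Hu 0 ltac:(lia)) as Hg'.
  rewrite S_rel_eq0_iff by assumption. apply and_iff_compat_l.
  transitivity
    (forall u, inI a b u -> ode_residual (fun x => Rabs (delta s e x)) (lambda s e) f g u = 0).
  { split; intros H u Hu; apply (S_residual_eq0_iff a b s e f g); auto. }
  assert (HM : forall u, inI a b u -> 0 < Rabs (delta s e u))
    by (intros u Hu; apply Rabs_pos_lt, Hd, Hu).
  assert (HMd : forall u, inI a b u -> ex_derive (fun x => Rabs (delta s e x)) u).
  { intros u Hu. eexists. apply is_derive_Rabs; [|exact (Hd u Hu)].
    apply Derive_correct, (ex_derive_delta a b s e); assumption. }
  assert (Hl : forall u, inI a b u -> continuous (lambda s e) u)
    by (intros u Hu; apply (continuous_lambda a b s e); assumption).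
  exact (ode_residual_eq0_iff a b _ (lambda s e) f g HM HMd Hf' Hg' u1 Hl Hu1 Hgu1 Hfg).
Qed.
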